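(* Let $p \geqslant 3$ be a prime and $d \geqslant 1$ with $p^d \geqslant 7$, let $V$ be a $d$-dimensional vector space over $\mathbb{F}_p$ with basis $\mathbf{b}_1,\ldots,\mathbf{b}_d$, let $G = \mathrm{Sym}(V)$, and let $T \leqslant \mathrm{GL}(V)$ be the group of matrices diagonal with respect to this basis. Let $l_2 = d$ if $p \in \{3,5\}$ and $l_2 = d\,\Omega(p-1)$ otherwise. Then there exist subsets $Y_1,\ldots,Y_{l_2} \subseteq G$ such that \[ T > \bigcap_{x \in Y_1} T^x > \bigcap_{x \in Y_2} T^x > \cdots > \bigcap_{x \in Y_{l_2}} T^x = 1. \]
   Context: $\Omega(k)$ is the number of prime factors of $k$ counted with multiplicity. $\mathrm{GL}(V)$ is regarded as a subgroup of $\mathrm{Sym}(V)$; inclusions $>$ are strict. *)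

From mathcomp Require Import all_boot all_order all_algebra all_fingroup.
Set Implicit Arguments. Unset Strict Implicit. Unset Printing Implicit Defensive.
Import GRing.Theory.

Definition Omega (k : nat) : nat := \sum_(q <- primes k) logn q k.

Notation Vec p d := 'rV['F_p]_d.

(* T: permutations of V given by v |-> v * D with D an invertible diagonal
   matrix (w.r.t. the standard basis), i.e. the diagonal subgroup of GL(V)
   viewed inside Sym(V). *)
Definition diagT (p d : nat) : {set {perm Vec p d}} :=
  [set s : {perm Vec p d} | [exists D : 'rV['F_p]_d,
      [forall i, D ord0 i != 0%R] && [forall v, s v == (v *m diag_mx D)%R]]].

Definition capconj (p d : nat) (Y : {set {perm Vec p d}}) : {set {perm Vec p d}} :=
  \bigcap_(x in Y) (diagT p d :^ x)%g.

Definition l2 (p d : nat) : nat :=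
  if (p == 3) || (p == 5) then d else d * Omega p.-1.

(* For an exponent vector n with every n_j dividing p - 1, let T_n be the
   group of diagonal matrices whose j-th entry is an n_j-th root of unity.
   T_n is the intersection of the conjugates of T by the permutations of V
   acting on a single coordinate j through a permutation f of F_p commuting
   with multiplication by the n_j-th roots of unity: such a conjugate contains
   diag(D) when D_j is an n_j-th root of unity, and when it is not, a suitable
   f admits no c with f (y D_j) = f y * c, which keeps diag(D) out.  Lowering
   the exponents one prime factor of p - 1 at a time, coordinate after
   coordinate, gives a strictly decreasing chain of d Omega(p - 1) such
   groups from T to 1.  The separating f exists for the exponent 2 only when
   p > 5, so for p = 3, 5 the exponents jump directly from p - 1 to 1. *)

From mathcomp Require Import all_boot all_order all_algebra all_fingroup all_field.
From mathcomp Require Import cyclic zify.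
Set Implicit Arguments. Unset Strict Implicit. Unset Printing Implicit Defensive.
Import GRing.Theory.

Lemma exists_notin (T : finType) (s : seq T) : size s < #|T| -> exists y, y \notin s.
Proof.
move=> s_small; apply/existsP; rewrite -negb_forall; apply: contraL s_small.
move=> /forallP s_all; rewrite -leqNgt (leq_trans _ (card_size s)) //.
by apply/subset_leq_card/subsetP => x _; apply: s_all.
Qed.

Section SeparatingPermutations.
Variable F : finFieldType.
Local Open Scope ring_scope.

Lemma expf_card_pred (a : F) : a != 0 -> a ^+ #|F|.-1 = 1.
Proof.
move=> a0; apply: (mulIf a0); rewrite mul1r -exprSr prednK ?expf_card //.
exact: ltn_trans (finNzRing_gt1 F).
Qed.

Lemma finField_prim_root_exists m :
  (m %| #|F|.-1)%N -> exists h : F, m.-primitive_root h.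
Proof.
move=> m_dvd.
have : has (#|F|.-1).-primitive_root (enum [pred x : F | x != 0]).
  apply: has_prim_root; first by rewrite -subn1 subn_gt0 finNzRing_gt1.
  - by apply/allP => x; rewrite mem_enum unity_rootE => /expf_card_pred ->.
  - exact: enum_uniq.
  - by rewrite -cardE cardC1.
case/hasP => g _ g_prim.
by exists (g ^+ (#|F|.-1 %/ m)); apply: dvdn_prim_root.
Qed.

Definition intertwines (f : F -> F) (a : F) := exists c, forall y, f (y * a) = f y * c.

Definition roots_equivariant (m : nat) (f : {perm F}) : bool :=
  [forall b, (b ^+ m == 1) ==> [forall z, f (b * z) == b * f z]].

Lemma roots_equivariantP m (f : {perm F}) :
  reflect (forall b, b ^+ m = 1 -> forall z, f (b * z) = b * f z)
          (roots_equivariant m f).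
Proof.
apply: (iffP forallP) => [eqf b /eqP bm z | eqf b].
  by have /implyP/(_ bm)/forallP/(_ z)/eqP := eqf b.
by apply/implyP => /eqP bm; apply/forallP => z; rewrite eqf.
Qed.

Lemma roots_equivariant1 m : roots_equivariant m (1%g : {perm F}).
Proof. by apply/roots_equivariantP => b _ z; rewrite !perm1. Qed.

Lemma roots_equivariantV m (f : {perm F}) :
  roots_equivariant m f -> roots_equivariant m f^-1.
Proof.
move/roots_equivariantP => eqf; apply/roots_equivariantP => b bm z.
by apply: (canLR (permK f)); rewrite eqf // permKV.
Qed.

Definition separating (m : nat) := forall a : F, a != 0 -> a ^+ m != 1 ->
  exists2 f : {perm F}, roots_equivariant m f & ~ intertwines f a.

Lemma separating_card_pred : separating #|F|.-1.
Proof. by move=> a /expf_card_pred ->; rewrite eqxx. Qed.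

Lemma separating1 : separating 1.
Proof.
move=> a _; rewrite expr1 => a1.
have one_sub_inj : injective (fun z : F => 1 - z) by move=> x y /addrI/oppr_inj.
exists (perm one_sub_inj).
  by apply/roots_equivariantP => b; rewrite expr1 => -> z; rewrite !mul1r.
case=> c fc; move: (fc 0) (fc 1); rewrite !permE /= !mul0r mul1r subr0 subrr.
by rewrite mul1r => <-; rewrite mulr1 => /eqP; rewrite subr_eq0 eq_sym (negbTE a1).
Qed.

(* g multiplies the m-th roots of unity by h and fixes the other points.  If
   g intertwines a with c, evaluating at a^-1 and at 1 gives c = a h and
   h^2 = 1, so m = 2; then any y with y and y a outside {0, 1, -1} gives
   y a = y a h. *)
Lemma separating_prim_root m (h : F) : m.-primitive_root h -> (1 < m)%N ->
  (m = 2 -> 5 < #|F|)%N -> separating m.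
Proof.
move=> h_prim m_gt1 F_big a a0 am.
have hm : h ^+ m = 1 := prim_expr_order h_prim.
have h1 : h != 1 by rewrite -[h]expr1 -(prim_order_dvd h_prim) gtnNdvd.
have h0 : h != 0 by rewrite (prim_root_eq0 h_prim) -lt0n ltnW.
pose g z := if z ^+ m == 1 then z * h else z.
have root_mulh z : ((z * h) ^+ m == 1) = (z ^+ m == 1) by rewrite exprMn hm mulr1.
have g_inj : injective g.
  move=> z1 z2; rewrite /g; case: ifP => r1; case: ifP => r2 //.
  - exact: mulIf.
  - by move=> e; move: r2; rewrite -e root_mulh r1.
  - by move=> e; move: r1; rewrite e root_mulh r2.
exists (perm g_inj).
  apply/roots_equivariantP => b bm z; rewrite !permE /g exprMn bm mul1r.
  by case: ifP; rewrite ?mulrA.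
case=> c gc.
have c_ah : c = a * h.
  move: (gc a^-1); rewrite !permE /g /= mulVf // expr1n eqxx mul1r.
  by rewrite exprVn invr_eq1 (negbTE am) => ->; rewrite mulrA mulfV ?mul1r.
have h2 : h ^+ 2 = 1.
  move: (gc 1); rewrite !permE /g /= mul1r (negbTE am) expr1n eqxx mul1r c_ah.
  by rewrite mulrCA -{1}[a]mulr1 => /(mulfI a0) ->.
have m2 : m = 2%N.
  by apply/eqP; rewrite eqn_leq dvdn_leq // ?(prim_order_dvd h_prim) ?h2.
have [y] := exists_notin (F_big m2) (s := [:: 0; 1; -1; a^-1; -a^-1]).
rewrite !inE !negb_or => /and5P [y0 y1 yN1 ya1 yNa1].
move: (gc y); rewrite !permE /g /= m2 !sqrf_eq1 (negbTE y1) (negbTE yN1).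
have mul_aE z : (y * a == z) = (y == z / a) by rewrite -[RHS](inj_eq (mulIf a0)) divfK.
rewrite !mul_aE mul1r mulN1r (negbTE ya1) (negbTE yNa1) /=.
rewrite c_ah mulrA -{1}[y * a]mulr1 => /(mulfI (mulf_neq0 y0 a0)) /esym/eqP.
by rewrite (negbTE h1).
Qed.

Lemma separating_dvd m : (m %| #|F|.-1)%N -> (m = 2 -> 5 < #|F|)%N -> separating m.
Proof.
case: m => [_ _ a _|[_ _|m m_dvd F_big]]; first by rewrite expr0 eqxx.
  exact: separating1.
have [h h_prim] := finField_prim_root_exists m_dvd.
exact: separating_prim_root h_prim _ F_big.
Qed.

End SeparatingPermutations.

Definition tail_prod (Q : seq nat) (s : nat) : nat := \prod_(q <- drop s Q) q.

Lemma tail_prod_dvd Q s : tail_prod Q s.+1 %| tail_prod Q s.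
Proof.
rewrite /tail_prod; case: (ltnP s (size Q)) => [lt | ge].
  by rewrite (drop_nth 0 lt) big_cons dvdn_mull.
by rewrite !drop_oversize ?big_nil // (leq_trans ge).
Qed.

Lemma tail_prod_dvd_prod Q s : tail_prod Q s %| \prod_(q <- Q) q.
Proof. by rewrite -{2}(cat_take_drop s Q) big_cat dvdn_mull. Qed.

Lemma tail_prod_gt0 Q s : all (leq 2) Q -> 0 < tail_prod Q s.
Proof.
move=> Q_gt1; rewrite /tail_prod big_seq prodn_cond_gt0 // => q /mem_drop.
by move/(allP Q_gt1)/ltnW.
Qed.

Lemma tail_prod_lt Q s : all (leq 2) Q -> s < size Q ->
  tail_prod Q s.+1 < tail_prod Q s.
Proof.
move=> Q_gt1 s_lt; rewrite {2}/tail_prod (drop_nth 0 s_lt) big_cons.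
by rewrite ltn_Pmull ?tail_prod_gt0 ?(allP Q_gt1) ?mem_nth.
Qed.

(* The exponent of coordinate j after k refinement steps: coordinates below
   k / |Q| are finished, coordinate k / |Q| has lost its first k mod |Q|
   factors, and the later ones, for which the truncated k - j |Q| is 0, still
   carry the full product. *)
Definition chain_exponent (Q : seq nat) (k j : nat) : nat :=
  tail_prod Q (minn (size Q) (k - j * size Q)).

Lemma chain_exponent_dvd Q k j : chain_exponent Q k.+1 j %| chain_exponent Q k j.
Proof.
rewrite /chain_exponent; move: (size Q) => r; move: (j * r) => jr.
have [-> | ->] : minn r (k.+1 - jr) = minn r (k - jr) \/
                 minn r (k.+1 - jr) = (minn r (k - jr)).+1 by lia.
  exact: dvdnn.
exact: tail_prod_dvd.
Qed.

Lemma chain_exponent_lt Q k : all (leq 2) Q -> 0 < size Q ->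
  chain_exponent Q k.+1 (k %/ size Q) < chain_exponent Q k (k %/ size Q).
Proof.
move=> Q_gt1 r_gt0; rewrite /chain_exponent.
have := ltn_pmod k r_gt0; have := divn_eq k (size Q).
move: (k %/ size Q * size Q) => kr; move: (k %% size Q) => s k_eq s_lt.
have -> : minn (size Q) (k.+1 - kr) = s.+1 by lia.
have -> : minn (size Q) (k - kr) = s by lia.
exact: tail_prod_lt.
Qed.

Lemma chain_exponent0 Q j : chain_exponent Q 0 j = \prod_(q <- Q) q.
Proof. by rewrite /chain_exponent sub0n minn0 /tail_prod drop0. Qed.

Lemma chain_exponent_last Q d j : j < d -> chain_exponent Q (d * size Q) j = 1.
Proof.
move=> j_lt; rewrite /chain_exponent /tail_prod (minn_idPl _) ?drop_size ?big_nil //.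
by rewrite -mulnBl leq_pmull ?subn_gt0.
Qed.

Definition prime_factor_seq (n : nat) : seq nat :=
  flatten [seq nseq (logn q n) q | q <- primes n].

Lemma size_prime_factor_seq n : size (prime_factor_seq n) = Omega n.
Proof.
rewrite size_flatten /shape -map_comp sumnE big_map /Omega.
by apply: eq_bigr => q _; rewrite /= size_nseq.
Qed.

Lemma prod_prime_factor_seq n : 0 < n -> \prod_(q <- prime_factor_seq n) q = n.
Proof.
move=> n_gt0; rewrite big_flatten /= big_map [RHS](prod_prime_decomp n_gt0).
by rewrite prime_decompE big_map; apply: eq_bigr => q _; rewrite big_nseq iter_muln_1.
Qed.

Lemma prime_factor_seq_gt1 n : all (leq 2) (prime_factor_seq n).
Proof.
apply/allP => q /flattenP [s /mapP [q' q'_n ->]]; rewrite mem_nseq => /andP [_ /eqP ->].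
by rewrite prime_gt1 //; move: q'_n; rewrite mem_primes => /andP [].
Qed.

Section DiagonalSubgroups.
Variables (p d : nat).
Local Notation V := 'rV['F_p]_d.
Local Notation T := (diagT p d).
Local Open Scope ring_scope.
Local Notation ones := (const_mx 1 : V).

Definition coord_fun (j : 'I_d) (f : {perm 'F_p}) (v : V) : V :=
  \row_k (if k == j then f (v 0 k) else v 0 k).

Lemma coord_fun_inj j f : injective (coord_fun j f).
Proof.
move=> v w /rowP vw; apply/rowP => k; move: (vw k); rewrite !mxE.
by case: eqP => // _; apply: perm_inj.
Qed.

Definition coord_perm (j : 'I_d) (f : {perm 'F_p}) : {perm V} :=
  perm (@coord_fun_inj j f).

Lemma coord_permE j f v k :
  coord_perm j f v 0 k = if k == j then f (v 0 k) else v 0 k.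
Proof. by rewrite permE mxE. Qed.

Lemma coord_perm1 j : coord_perm j 1 = 1%g.
Proof.
by apply/permP => v; apply/rowP => k; rewrite perm1 coord_permE perm1 if_same.
Qed.

Lemma coord_permV j f : coord_perm j f^-1 = (coord_perm j f)^-1%g.
Proof.
apply/permP => v; apply: (perm_inj (s := coord_perm j f)); rewrite permKV.
by apply/rowP => k; rewrite !coord_permE; case: eqP => // ->; rewrite permKV.
Qed.

Lemma diagT_entry (t : {perm V}) v k : t \in T -> t v 0 k = v 0 k * t ones 0 k.
Proof.
rewrite inE => /existsP [D /andP [_ /forallP tD]].
by rewrite !(eqP (tD _)) !mul_mx_diag !mxE mul1r.
Qed.

Lemma diagT_ones_neq0 (t : {perm V}) k : t \in T -> t ones 0 k != 0.
Proof.
rewrite inE => /existsP [D /andP [/forallP D0 /forallP tD]].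
by rewrite (eqP (tD _)) mul_mx_diag !mxE mul1r.
Qed.

Lemma diagT_of_entries (t : {perm V}) (D : V) : (forall k, D 0 k != 0) ->
  (forall v k, t v 0 k = v 0 k * D 0 k) -> t \in T.
Proof.
move=> D0 tD; rewrite inE; apply/existsP; exists D; apply/andP; split.
  exact/forallP.
by apply/forallP => v; apply/eqP/rowP => k; rewrite tD mul_mx_diag mxE.
Qed.

Lemma exists_diagT_coord (j : 'I_d) (h : 'F_p) : h != 0 ->
  exists2 t, t \in T & forall k, t ones 0 k = if k == j then h else 1.
Proof.
move=> h0.
pose D : V := \row_k (if k == j then h else 1).
pose f : {perm 'F_p} := perm (mulIf h0).
have tE v k : coord_perm j f v 0 k = v 0 k * D 0 k.
  by rewrite coord_permE permE mxE; case: eqP; rewrite ?mulr1.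
exists (coord_perm j f) => [|k]; last by rewrite tE !mxE mul1r.
apply: (diagT_of_entries _ tE) => k.
by rewrite mxE; case: ifP => _; rewrite ?oner_neq0.
Qed.

Lemma diagT_commute_coord_perm (t : {perm V}) (j : 'I_d) (f : {perm 'F_p}) :
    t \in T -> (forall z, f (t ones 0 j * z) = t ones 0 j * f z) ->
  commute t (coord_perm j f).
Proof.
move=> tT fD; apply/permP => v; rewrite !permM; apply/rowP => k.
rewrite coord_permE (diagT_entry v k tT) (diagT_entry (coord_perm j f v) k tT).
by rewrite coord_permE; case: eqP => [->|_] //; rewrite mulrC fD mulrC.
Qed.

Lemma intertwines_of_conj_diagT (t : {perm V}) (j : 'I_d) (f : {perm 'F_p}) :
  t \in T -> t \in (T :^ (coord_perm j f)^-1)%g -> intertwines f (t ones 0 j).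
Proof.
move=> tT; rewrite mem_conjgV => tfT.
exists ((t ^ coord_perm j f)%g ones 0 j) => y.
have := diagT_entry (const_mx (f y)) j tfT.
rewrite conjgE !permM -coord_permV coord_permE eqxx (diagT_entry _ _ tT).
by rewrite coord_permE eqxx mxE permK.
Qed.

Definition equivariant_coord_perms (n : 'I_d -> nat) : {set {perm V}} :=
  [set coord_perm j f | j : 'I_d, f : {perm 'F_p} in roots_equivariant (n j)].

Definition diag_roots (n : 'I_d -> nat) : {set {perm V}} :=
  [set t in T | [forall k, t ones 0 k ^+ n k == 1]].

Lemma capconj_equivariant_coord_perms (n : 'I_d -> nat) : (0 < d)%N ->
    (forall k, separating 'F_p (n k)) ->
  capconj (equivariant_coord_perms n) = diag_roots n.
Proof.
move=> d_gt0 sep_n; apply/setP => t; rewrite inE.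
apply/bigcapP/andP => [tY | [tT /forallP tn] _ /imset2P [j f _ f_eq ->]].
  have tT : t \in T.
    rewrite -(conjsg1 T); apply: tY; rewrite -(coord_perm1 (Ordinal d_gt0)).
    exact: imset2_f (@roots_equivariant1 'F_p _).
  split=> //; apply/forallP => k; apply/negPn/negP => tk.
  have [f f_eq f_sep] := sep_n k _ (diagT_ones_neq0 k tT) tk.
  apply: f_sep; apply: intertwines_of_conj_diagT tT _.
  by rewrite -coord_permV tY //; exact: imset2_f (roots_equivariantV f_eq).
have tf : commute t (coord_perm j f).
  apply: diagT_commute_coord_perm => //.
  by apply: (roots_equivariantP _ _ f_eq); apply/eqP.
by rewrite mem_conjg; move/commgP/conjg_fixP: (commuteV tf) => ->.
Qed.

Hypothesis p_prime : prime p.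

Lemma diag_roots_full n : (forall k, p.-1 %| n k)%N -> diag_roots n = T.
Proof.
move=> n_dvd; apply/setP => t; rewrite inE andb_idr // => tT.
apply/forallP => k; have := expf_card_pred (diagT_ones_neq0 k tT).
by rewrite card_Fp // -(divnK (n_dvd k)) mulnC exprM => ->; rewrite expr1n.
Qed.

Lemma diag_roots_trivial n : (forall k, n k = 1%N) -> diag_roots n = [set 1%g].
Proof.
move=> n1; apply/setP => t; rewrite in_set1 inE.
apply/andP/eqP => [[tT /forallP tn] | ->].
  apply/permP => v; apply/rowP => k; rewrite perm1 (diagT_entry v k tT).
  by move/eqP: (tn k); rewrite n1 expr1 => ->; rewrite mulr1.
split; last by apply/forallP => k; rewrite perm1 mxE expr1n.
apply: (diagT_of_entries (D := ones)) => [k|v k].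
  by rewrite mxE oner_neq0.
by rewrite perm1 mxE mulr1.
Qed.

Lemma diag_roots_proper n n' j : (forall k, n' k %| n k)%N -> (n j %| p.-1)%N ->
  (0 < n' j < n j)%N -> diag_roots n' \proper diag_roots n.
Proof.
move=> n'_dvd nj_dvd /andP [n'j_gt0 n'j_lt]; rewrite properE; apply/andP; split.
  apply/subsetP => t; rewrite !inE => /andP [tT /forallP tn']; rewrite tT.
  apply/forallP => k.
  by rewrite -(divnK (n'_dvd k)) mulnC exprM (eqP (tn' k)) expr1n.
have [h h_prim] : exists h : 'F_p, (n j).-primitive_root h.
  by apply: finField_prim_root_exists; rewrite card_Fp.
have h0 : h != 0 by rewrite (prim_root_eq0 h_prim) -lt0n (leq_ltn_trans _ n'j_lt).
have [t tT tE] := exists_diagT_coord j h0.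
apply/subsetPn; exists t; rewrite inE tT /=.
  apply/forallP => k; rewrite tE.
  by case: ifP => [/eqP ->|_]; rewrite ?(prim_expr_order h_prim) ?expr1n.
by apply/forallPn; exists j; rewrite tE eqxx -(prim_order_dvd h_prim) gtnNdvd.
Qed.

Lemma conj_chain_of_factors (Q : seq nat) : (0 < d)%N -> Q != [::] ->
    all (leq 2) Q -> (\prod_(q <- Q) q)%N = p.-1 ->
    (forall s, separating 'F_p (tail_prod Q s)) ->
  exists Y : nat -> {set {perm V}},
    [/\ capconj (Y 1%N) \proper T,
        (forall k, (1 <= k < d * size Q)%N -> capconj (Y k.+1) \proper capconj (Y k))
      & capconj (Y (d * size Q)%N) = [set 1%g]].
Proof.
move=> d_gt0 Q_nil Q_gt1 Q_prod Q_sep.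
have r_gt0 : (0 < size Q)%N by rewrite lt0n size_eq0.
pose n k (j : 'I_d) := chain_exponent Q k j.
have [Y capY] : {Y | forall k, capconj (Y k) = diag_roots (n k)}.
  exists (fun k => equivariant_coord_perms (n k)) => k.
  by apply: capconj_equivariant_coord_perms => // j; apply: Q_sep.
have step k : (k < d * size Q)%N -> diag_roots (n k.+1) \proper diag_roots (n k).
  move=> k_lt; have j_lt : (k %/ size Q < d)%N by rewrite ltn_divLR.
  apply: (diag_roots_proper (j := Ordinal j_lt)) => [j||].
  - exact: chain_exponent_dvd.
  - by rewrite -Q_prod tail_prod_dvd_prod.
  - by rewrite {1}/n /chain_exponent tail_prod_gt0 ?chain_exponent_lt.
exists Y; split=> [|k /andP [_ k_lt]|]; rewrite ?capY.
- have -> : T = diag_roots (n 0%N).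
    by rewrite diag_roots_full // => j; rewrite /n chain_exponent0 Q_prod.
  by apply: step; rewrite muln_gt0 d_gt0.
- exact: step.
- by apply: diag_roots_trivial => j; apply: chain_exponent_last.
Qed.

End DiagonalSubgroups.

Theorem lemma3p7 (p d : nat) (hp : prime p) (hp3 : 3 <= p) (hd : 1 <= d)
    (hpd : 7 <= p ^ d) :
  exists Y : nat -> {set {perm 'rV['F_p]_d}},
    [/\ capconj (Y 1) \proper diagT p d,
        (forall k, 1 <= k < l2 p d -> capconj (Y k.+1) \proper capconj (Y k))
      & capconj (Y (l2 p d)) = [set 1%g]].
Proof.
rewrite /l2; case: ifP => [p35 | /norP [p3 p5]].
  have := conj_chain_of_factors (Q := [:: p.-1]) hp hd; rewrite muln1; apply => //=.
  - by rewrite andbT -ltnS prednK ?prime_gt0.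
  - by rewrite big_seq1.
  case=> [|s]; rewrite /tail_prod /= ?big_seq1 ?drop_oversize ?big_nil //.
    by have := @separating_card_pred 'F_p; rewrite card_Fp.
  exact: separating1.
have p7 : 7 <= p by move: hp p3 p5 hp3 {hpd}; case: p => [|[|[|[|[|[|[|p]]]]]]].
have p1_gt0 : 0 < p.-1 by rewrite -ltnS prednK ?prime_gt0 // ltnW.
rewrite -size_prime_factor_seq; apply: conj_chain_of_factors => //.
- apply: contraTneq p7 => Q_nil; move: (prod_prime_factor_seq p1_gt0).
  by rewrite Q_nil big_nil => p1; rewrite -(prednK (prime_gt0 hp)) -p1.
- exact: prime_factor_seq_gt1.
- exact: prod_prime_factor_seq.
move=> s; apply: separating_dvd; rewrite card_Fp //.
  by rewrite -{2}(prod_prime_factor_seq p1_gt0) tail_prod_dvd_prod.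
by move=> _; apply: leq_trans p7.
Qed.
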